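(* Let $k$ be a positive integer and let $D$ be a connected digraph (i.e., its underlying undirected graph is connected) of order $n\ge\max\{k,2\}$. Then $\gamma_{rk}(D)\le\gamma_{trk}(D)\le 2\gamma_{rk}(D)-k+1$, and both bounds are sharp (attained by some such digraphs).
   Context: All digraphs are finite, with no loops or multiple arcs (pairs of opposite arcs are allowed). $N^-(v)$ denotes the set of in-neighbors of $v$. A vertex is isolated if it has no in-neighbor and no out-neighbor. For a positive integer $k$, a $k$-rainbow dominating function ($k$RDF) on $D$ is a function $f:V(D)\to\mathcal P(\{1,\dots,k\})$ such that every $v$ with $f(v)=\emptyset$ satisfies $\bigcup_{u\in N^-(v)}f(u)=\{1,\dots,k\}$; its weight is $\omega(f)=\sum_v|f(v)|$; $\gamma_{rk}(D)$ is the minimum weight of a $k$RDF on $D$. If $D$ has no isolated vertex, a total $k$RDF (T$k$RDF) is a $k$RDF $f$ such that the subdigraph induced by $\{v:f(v)\ne\emptyset\}$ has no isolated vertex; $\gamma_{trk}(D)$ is the minimum weight of a T$k$RDF. *)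

From mathcomp Require Import all_boot.
Set Implicit Arguments. Unset Strict Implicit. Unset Printing Implicit Defensive.

(* A digraph on a finite vertex type V is given by its arc relation
   [arc u v] = "there is an arc u -> v".  No loops = irreflexive. *)
Definition loopless (V : finType) (arc : rel V) : Prop := forall v, ~~ arc v v.

Definition uadj (V : finType) (arc : rel V) : rel V :=
  fun u v => arc u v || arc v u.

Definition dconnected (V : finType) (arc : rel V) : Prop :=
  forall u v : V, connect (uadj arc) u v.

Definition isolated (V : finType) (arc : rel V) (v : V) : bool :=
  [forall u, ~~ uadj arc u v].

Definition is_kRDF (V : finType) (arc : rel V) (k : nat)
    (f : {ffun V -> {set 'I_k}}) : bool :=
  [forall v, (f v == set0) ==>
     (\bigcup_(u | arc u v) f u == [set: 'I_k])].

Definition weight (V : finType) (k : nat) (f : {ffun V -> {set 'I_k}}) : nat :=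
  \sum_(v : V) #|f v|.

(* total kRDF: the subdigraph induced by {v : f v <> set0} has no isolated
   vertex *)
Definition is_TkRDF (V : finType) (arc : rel V) (k : nat)
    (f : {ffun V -> {set 'I_k}}) : bool :=
  is_kRDF arc f &&
  [forall v, (f v != set0) ==>
     [exists u, (f u != set0) && uadj arc u v]].

(* the all-full function has weight #|V| * k and is a kRDF (and a TkRDF when
   there is no isolated vertex), so it is a safe default for the minimum *)
Definition gamma_rk (V : finType) (arc : rel V) (k : nat) : nat :=
  \big[minn/(#|V| * k)%N]_(f : {ffun V -> {set 'I_k}} | is_kRDF arc f) weight f.

Definition gamma_trk (V : finType) (arc : rel V) (k : nat) : nat :=
  \big[minn/(#|V| * k)%N]_(f : {ffun V -> {set 'I_k}} | is_TkRDF arc f) weight f.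

From mathcomp Require Import all_boot all_order zify.
Set Implicit Arguments. Unset Strict Implicit. Unset Printing Implicit Defensive.
Import Order.TTheory.

(* Every TkRDF is a kRDF, so only the upper bound needs an argument.  Take a
   kRDF f of minimum weight.  If no vertex is empty under f, f is already total,
   since every vertex of a connected digraph of order >= 2 has a neighbour.
   Otherwise fix w with f w empty: its in-neighbours carry weight at least k.
   Call a vertex stranded if it is coloured, has no coloured neighbour and is no
   in-neighbour of w.  Adding one colour at w and at one neighbour of each
   stranded vertex yields a TkRDF of weight at most w(f) + 1 + s, and the s
   stranded vertices lie outside N^-(w), so s <= w(f) - k.
   Both parameters equal k on the complete digraph of order k >= 2 and equal 2
   on the directed path of order 3 (k = 1); on the out-star K_{1,k} they are
   k and k + 1. *)

Lemma card_bigcup_le (I T : finType) (P : pred I) (F : I -> {set T}) :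
  #|\bigcup_(i | P i) F i| <= \sum_(i | P i) #|F i|.
Proof.
apply: (big_ind2 (fun (A : {set T}) n => #|A| <= n)) => [|A m B n Am Bn|//].
  by rewrite cards0.
by rewrite (leq_trans (leq_card_setU A B).1) ?leq_add.
Qed.

Section Weight.
Variables (V : finType) (k : nat).
Implicit Types (f g : {ffun V -> {set 'I_k}}) (P : pred {ffun V -> {set 'I_k}}).
Implicit Types (T : {set V}) (c : 'I_k) (v : V).

Definition min_weight P : nat := \big[minn/(#|V| * k)%N]_(f | P f) weight f.

Lemma weight_le_card_mul f : weight f <= #|V| * k.
Proof.
rewrite /weight -sum1_card big_distrl /=; apply: leq_sum => v _.
by rewrite mul1n (leq_trans (max_card _)) ?card_ord.
Qed.

Lemma min_weight_le P f : P f -> min_weight P <= weight f.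
Proof.
by move=> Pf; have := bigmin_le_cond (#|V| * k) (@weight V k) Pf; rewrite minEnat.
Qed.

Lemma min_weight_sub P P' : (forall f, P f -> P' f) -> min_weight P' <= min_weight P.
Proof.
move=> PP'.
by have := @sub_bigmin _ _ (#|V| * k) _ (index_enum _) _ _ (@weight V k) PP'; rewrite minEnat.
Qed.

Lemma min_weight_attained P f : P f -> exists2 g, P g & min_weight P = weight g.
Proof.
move=> Pf; have [g Pg] := @eq_bigmin _ _ _ (#|V| * k) _ _ (@weight V k) Pf
  (fun g _ => weight_le_card_mul g).
by rewrite minEnat; exists g.
Qed.

Lemma min_weight_eq P f L :
  P f -> weight f <= L -> (forall g, P g -> L <= weight g) -> min_weight P = L.
Proof.
move=> Pf fL L_min; apply/eqP; rewrite eqn_leq (leq_trans (min_weight_le Pf)) //=.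
by have [g Pg ->] := min_weight_attained Pf; apply: L_min.
Qed.

Lemma card_nonempty_le_sum f (A : pred V) :
  #|[set v | A v & f v != set0]| <= \sum_(v | A v) #|f v|.
Proof.
rewrite -sum1_card big_mkcond [leqRHS]big_mkcond /=; apply: leq_sum => v _.
by rewrite inE; case: (A v) => //=; rewrite -card_gt0; case: posnP.
Qed.

Lemma card_le_weight f : (forall v, f v != set0) -> #|V| <= weight f.
Proof.
move=> f_ne; apply: leq_trans (card_nonempty_le_sum f predT).
by rewrite -cardsT subset_leq_card //; apply/subsetP => v _; rewrite inE f_ne.
Qed.

Lemma leq_card2_weight f x y : x != y -> #|f x| + #|f y| <= weight f.
Proof.
move=> xy; rewrite /weight (bigD1 x) //= (bigD1 y) 1?eq_sym //=.
by rewrite addnA leq_addr.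
Qed.

Definition add_color f (T : {set V}) (c : 'I_k) : {ffun V -> {set 'I_k}} :=
  [ffun v => if v \in T then c |: f v else f v].

Lemma add_color_sub f T c v : f v \subset add_color f T c v.
Proof. by rewrite ffunE; case: ifP => _; [apply: subsetUr | apply: subxx]. Qed.

Lemma mem_add_color f T c v : v \in T -> c \in add_color f T c v.
Proof. by move=> vT; rewrite ffunE vT setU11. Qed.

Lemma weight_add_color f T c : weight (add_color f T c) <= weight f + #|T|.
Proof.
rewrite /weight -sum1_card [\sum_(v in T) 1]big_mkcond -big_split /=.
apply: leq_sum => v _; rewrite ffunE; case: ifP => _; last by rewrite addn0.
by rewrite cardsU1 addnC leq_add2l leq_b1.
Qed.

End Weight.

Lemma uadjC (V : finType) (arc : rel V) u v : uadj arc u v = uadj arc v u.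
Proof. exact: orbC. Qed.

Lemma dconnected_center (V : finType) (arc : rel V) r :
  (forall v, v != r -> uadj arc r v) -> dconnected arc.
Proof.
move=> center u v; apply: (@connect_trans _ _ r).
  case: (eqVneq u r) => [-> | ur]; first exact: connect0.
  by apply: connect1; rewrite uadjC center.
case: (eqVneq v r) => [-> | vr]; first exact: connect0.
exact: connect1 (center v vr).
Qed.

Lemma dconnected_has_nbr (V : finType) (arc : rel V) :
  dconnected arc -> 1 < #|V| -> forall x, exists u, uadj arc u x.
Proof.
move=> conn nV x; have /set0Pn[y] : [set~ x] != set0 by rewrite -card_gt0 cardsC1; lia.
rewrite !inE => yx.
have /connectP[[|z p] /= path_xy last_y] := conn x y; first by rewrite last_y eqxx in yx.
by exists z; case/andP: path_xy; rewrite uadjC.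
Qed.

Section Rainbow.
Variables (V : finType) (arc : rel V) (k : nat).
Implicit Types (f g : {ffun V -> {set 'I_k}}) (v : V).

Lemma TkRDF_kRDF f : is_TkRDF arc f -> is_kRDF arc f.
Proof. by case/andP. Qed.

Lemma TkRDF_nbr f v :
  is_TkRDF arc f -> f v != set0 -> exists2 u, f u != set0 & uadj arc u v.
Proof. by case/andP=> _ /forallP/(_ v)/implyP f_T /f_T/existsP[u /andP[]]; exists u. Qed.

Lemma kRDF_cover f v : is_kRDF arc f -> f v = set0 -> \bigcup_(u | arc u v) f u = setT.
Proof. by move=> /forallP/(_ v)/implyP f_rdf fv0; apply/eqP/f_rdf; rewrite fv0. Qed.

Lemma kRDF_in_nbr f v :
  0 < k -> is_kRDF arc f -> f v = set0 -> exists2 u, arc u v & f u != set0.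
Proof.
move=> k_gt0 f_rdf fv0; pose c := Ordinal k_gt0.
have : c \in \bigcup_(u | arc u v) f u by rewrite kRDF_cover ?inE.
by case/bigcupP => u uv cu; exists u => //; apply/set0Pn; exists c.
Qed.

Lemma kRDF_in_weight f v :
  is_kRDF arc f -> f v = set0 -> k <= \sum_(u | arc u v) #|f u|.
Proof.
move=> f_rdf fv0; apply: leq_trans (card_bigcup_le _ _).
by rewrite kRDF_cover // cardsT card_ord.
Qed.

Lemma kRDF_weight_ge f : is_kRDF arc f -> k <= #|V| -> k <= weight f.
Proof.
move=> f_rdf kV; case: (pickP (fun v => f v == set0)) => [v /eqP fv0 | f_ne].
  apply: leq_trans (kRDF_in_weight f_rdf fv0) _.
  by rewrite /weight [leqRHS](bigID (arc^~ v)) leq_addr.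
by apply: leq_trans kV (card_le_weight _) => v; rewrite f_ne.
Qed.

Lemma is_kRDF_mono f g : (forall v, f v \subset g v) -> is_kRDF arc f -> is_kRDF arc g.
Proof.
move=> fg f_rdf; apply/forallP => v; apply/implyP => /eqP gv0.
have fv0 : f v = set0 by apply/eqP; rewrite -subset0 -gv0 fg.
rewrite eqEsubset subsetT -(kRDF_cover f_rdf fv0).
by apply/bigcupsP => u uv; apply: subset_trans (fg u) (bigcup_sup _ uv).
Qed.

Lemma kRDF_of_full_in_nbr f :
  (forall v, f v = set0 -> exists2 u, arc u v & f u = setT) -> is_kRDF arc f.
Proof.
move=> full_nbr; apply/forallP => v; apply/implyP => /eqP/full_nbr[u uv fu].
by rewrite eqEsubset subsetT -fu; apply: (bigcup_sup u).
Qed.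

Lemma full_support_kRDF f : (forall v, f v != set0) -> is_kRDF arc f.
Proof. by move=> f_ne; apply/forallP => v; rewrite (negbTE (f_ne v)). Qed.

Lemma full_support_TkRDF f :
  (forall v, exists u, uadj arc u v) -> (forall v, f v != set0) -> is_TkRDF arc f.
Proof.
move=> nbr f_ne; rewrite /is_TkRDF full_support_kRDF //; apply/forallP => v.
by have [u uv] := nbr v; apply/implyP => _; apply/existsP; exists u; rewrite f_ne.
Qed.

Lemma gamma_rk_attained :
  0 < k -> exists2 f : {ffun V -> {set 'I_k}}, is_kRDF arc f & gamma_rk arc k = weight f.
Proof.
move=> k_gt0; apply: (@min_weight_attained _ _ _ [ffun=> setT]).
by apply: full_support_kRDF => v; rewrite ffunE -card_gt0 cardsT card_ord.
Qed.

Lemma gamma_rk_trk_eq f L :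
  is_TkRDF arc f -> weight f <= L -> (forall g, is_kRDF arc g -> L <= weight g) ->
  gamma_rk arc k = L /\ gamma_trk arc k = L.
Proof.
move=> f_T fL L_min; split; first exact: (min_weight_eq (TkRDF_kRDF f_T)).
by apply: (min_weight_eq f_T) => // g /TkRDF_kRDF; apply: L_min.
Qed.

End Rainbow.

Section Totalize.
Variables (V : finType) (arc : rel V) (k : nat).
Hypothesis k_gt0 : 0 < k.
Variable f : {ffun V -> {set 'I_k}}.
Hypothesis f_kRDF : is_kRDF arc f.
Variable w : V.
Hypothesis fw0 : f w = set0.
Variable nbr : V -> V.
Hypothesis nbrP : forall x, uadj arc (nbr x) x.

Definition stranded : {set V} :=
  [set x | [&& f x != set0, ~~ [exists u, (f u != set0) && uadj arc u x] & ~~ arc x w]].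

Definition totalize : {ffun V -> {set 'I_k}} :=
  add_color f (w |: nbr @: stranded) (Ordinal k_gt0).

Lemma totalize_nonempty v : f v != set0 -> totalize v != set0.
Proof. by apply: contraNneq => tv0; rewrite -subset0 -tv0 add_color_sub. Qed.

Lemma totalize_patched v : v \in w |: nbr @: stranded -> totalize v != set0.
Proof. by move=> v_patched; apply/set0Pn; exists (Ordinal k_gt0); apply: mem_add_color. Qed.

Lemma totalize_TkRDF : is_TkRDF arc totalize.
Proof.
apply/andP; split; first exact: is_kRDF_mono (add_color_sub f _ _) f_kRDF.
apply/forallP => v; apply/implyP => tv; apply/existsP.
case: (boolP (v \in w |: nbr @: stranded)) => [| v_unpatched].
  case/setU1P => [-> | /imsetP[x x_stranded ->]].
    have [u uw fu] := kRDF_in_nbr k_gt0 f_kRDF fw0.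
    by exists u; rewrite totalize_nonempty //= /uadj uw.
  move: x_stranded; rewrite inE => /and3P[fx _ _].
  by exists x; rewrite totalize_nonempty //= uadjC.
have fv : f v != set0 by move: tv; rewrite ffunE (negbTE v_unpatched).
case: (boolP [exists u, (f u != set0) && uadj arc u v]) => [/existsP[u /andP[fu uv]] | lonely].
  by exists u; rewrite totalize_nonempty.
case: (boolP (arc v w)) => [vw | not_vw].
  by exists w; rewrite totalize_patched ?setU11 //= /uadj vw orbT.
have v_stranded : v \in stranded by rewrite inE fv lonely.
by exists (nbr v); rewrite totalize_patched ?nbrP // setU1r ?imset_f.
Qed.

Lemma card_stranded : #|stranded| + k <= weight f.
Proof.
rewrite /weight (bigID (arc^~ w)) /= addnC leq_add ?kRDF_in_weight //.
apply: leq_trans (card_nonempty_le_sum f _); apply: subset_leq_card.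
by apply/subsetP => x; rewrite !inE => /and3P[-> _ ->].
Qed.

Lemma weight_totalize : weight totalize + k <= 2 * weight f + 1.
Proof.
have card_patch : #|w |: nbr @: stranded| <= 1 + #|stranded|.
  by rewrite cardsU1 leq_add ?leq_b1 ?leq_imset_card.
have := weight_add_color f (w |: nbr @: stranded) (Ordinal k_gt0).
have := card_stranded; rewrite -/totalize; lia.
Qed.

End Totalize.

Lemma TkRDF_of_kRDF (V : finType) (arc : rel V) (k : nat) (f : {ffun V -> {set 'I_k}}) :
  0 < k -> dconnected arc -> 1 < #|V| -> k <= #|V| -> is_kRDF arc f ->
  exists2 g : {ffun V -> {set 'I_k}}, is_TkRDF arc g & weight g + k <= 2 * weight f + 1.
Proof.
move=> k_gt0 conn nV kV f_kRDF; have has_nbr := dconnected_has_nbr conn nV.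
case: (pickP (fun v => f v == set0)) => [w /eqP fw0 | f_ne].
  have [nbr nbrP] := fin_all_exists has_nbr.
  by exists (totalize arc k_gt0 f w nbr); [apply: totalize_TkRDF | apply: weight_totalize].
exists f; first by apply: full_support_TkRDF => // v; rewrite f_ne.
by have := kRDF_weight_ge f_kRDF kV; lia.
Qed.

Definition complete_digraph (n : nat) : rel 'I_n := fun u v => u != v.
Arguments complete_digraph : clear implicits.

Lemma complete_digraph_loopless (n : nat) : loopless (complete_digraph n).
Proof. by move=> v; rewrite /complete_digraph eqxx. Qed.

Lemma complete_digraph_connected (n : nat) : dconnected (complete_digraph n).
Proof.
move=> u v; case: (eqVneq u v) => [-> | uv]; first exact: connect0.
by apply: connect1; rewrite /uadj /complete_digraph uv.
Qed.

Lemma gamma_complete_digraph (k : nat) :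
  1 < k -> gamma_rk (complete_digraph k) k = k /\ gamma_trk (complete_digraph k) k = k.
Proof.
move=> k_gt1; pose f : {ffun 'I_k -> {set 'I_k}} := [ffun v => [set v]].
apply: (gamma_rk_trk_eq (f := f)).
- apply: full_support_TkRDF => [|v]; last by rewrite ffunE -card_gt0 cards1.
  by apply: dconnected_has_nbr; [apply: complete_digraph_connected | rewrite card_ord].
- rewrite /weight; under eq_bigr do rewrite ffunE cards1.
  by rewrite sum1_card card_ord.
- by move=> g g_kRDF; apply: kRDF_weight_ge g_kRDF _; rewrite card_ord.
Qed.

Definition path3 : rel 'I_3 := fun u v => val v == (val u).+1.

Lemma path3_loopless : loopless path3.
Proof. by move=> -[[|[|[|?]]] ?]. Qed.

Lemma path3_connected : dconnected path3.
Proof. by apply: (@dconnected_center _ _ (Ordinal (isT : 1 < 3))) => -[[|[|[|?]]] ?]. Qed.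

Lemma gamma_path3 : gamma_rk path3 1 = 2 /\ gamma_trk path3 1 = 2.
Proof.
pose o0 : 'I_3 := ord0; pose o1 : 'I_3 := Ordinal (isT : 1 < 3).
pose o2 : 'I_3 := Ordinal (isT : 2 < 3).
pose f : {ffun 'I_3 -> {set 'I_1}} := [ffun v => if v == o2 then set0 else setT].
have fT v : v != o2 -> f v = setT by rewrite ffunE => /negbTE->.
apply: (gamma_rk_trk_eq (f := f)).
- apply/andP; split.
    apply: kRDF_of_full_in_nbr => v; case: (eqVneq v o2) => [-> _ | v2].
      by exists o1; rewrite ?fT.
    by rewrite (fT v v2) => /setP/(_ ord0); rewrite !inE.
  have fne v : v != o2 -> f v != set0 by move/fT->; rewrite -card_gt0 cardsT card_ord.
  apply/forallP => v; apply/implyP => fv; apply/existsP.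
  have v2 : v != o2 by apply: contraNneq fv => ->; rewrite /f ffunE eqxx.
  case: (eqVneq v o0) => [-> | v0]; first by exists o1; rewrite fne.
  by exists o0; rewrite fne //; move: v v0 v2 {fv} => -[[|[|[|?]]] ?].
- by rewrite /weight !big_ord_recl big_ord0 /f !ffunE /= cardsT cards0 card_ord.
- move=> g g_kRDF.
  have g0 : g o0 != set0.
    by apply/eqP => /(kRDF_in_nbr (isT : 0 < 1) g_kRDF)[].
  have [g2 | /negPn/eqP/(kRDF_in_nbr (isT : 0 < 1) g_kRDF)[u u2 gu]] := boolP (g o2 != set0).
    have := leq_card2_weight g (isT : o0 != o2); rewrite -!card_gt0 in g0 g2; lia.
  have u1 : u = o1 by apply/val_inj/eqP; rewrite -eqSS eq_sym.
  have := leq_card2_weight g (isT : o0 != o1); rewrite -u1 -!card_gt0 in g0 gu *; lia.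
Qed.

Definition out_star (n : nat) : rel 'I_n.+1 := fun u v => (u == ord0) && (v != ord0).
Arguments out_star : clear implicits.

Lemma out_star_loopless (n : nat) : loopless (out_star n).
Proof. by move=> v; rewrite /out_star andbN. Qed.

Lemma out_star_connected (n : nat) : dconnected (out_star n).
Proof. by apply: (@dconnected_center _ _ ord0) => v v0; rewrite /uadj /out_star eqxx v0. Qed.

Lemma out_star_TkRDF_weight_ge (k : nat) (h : {ffun 'I_k.+1 -> {set 'I_k}}) :
  0 < k -> is_TkRDF (out_star k) h -> k.+1 <= weight h.
Proof.
move=> k_gt0 h_T; have h_kRDF := TkRDF_kRDF h_T.
have [h0 | h0] := eqVneq (h ord0) setT.
  have [|u hu u0] := TkRDF_nbr (v := ord0) h_T; first by rewrite -card_gt0 h0 cardsT card_ord.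
  have u_ne0 : ord0 != u by apply: contraTneq u0 => <-; rewrite /uadj /out_star eqxx.
  apply: leq_trans (leq_card2_weight h u_ne0).
  by rewrite h0 cardsT card_ord -[leqLHS]addn1 leq_add2l card_gt0.
suff h_ne v : h v != set0 by have := card_le_weight h_ne; rewrite card_ord.
apply/eqP => hv0.
case: (eqVneq v ord0) => [v0 | v_ne0].
  by have [u] := kRDF_in_nbr k_gt0 h_kRDF hv0; rewrite /out_star v0 eqxx andbF.
move/eqP: h0; apply; rewrite -(kRDF_cover h_kRDF hv0).
by rewrite (big_pred1 ord0) // => u; rewrite /out_star v_ne0 andbT.
Qed.

Lemma gamma_out_star (k : nat) :
  0 < k -> gamma_rk (out_star k) k = k /\ gamma_trk (out_star k) k = k.+1.
Proof.
move=> k_gt0; pose c : 'I_k := Ordinal k_gt0.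
pose f : {ffun 'I_k.+1 -> {set 'I_k}} := [ffun v => if v == ord0 then setT else set0].
have f0 : f ord0 = setT by rewrite ffunE eqxx.
have f_kRDF : is_kRDF (out_star k) f.
  apply: kRDF_of_full_in_nbr => v fv0; exists ord0 => //; rewrite /out_star eqxx /=.
  by apply/eqP => v0; move/setP/(_ c): fv0; rewrite v0 f0 !inE.
have wf : weight f = k.
  rewrite /weight (bigD1 ord0) //= big1 => [|v /negbTE v0]; last by rewrite ffunE v0 cards0.
  by rewrite f0 cardsT card_ord addn0.
split.
  apply: (min_weight_eq f_kRDF); rewrite ?wf // => g g_kRDF.
  by apply: kRDF_weight_ge g_kRDF _; rewrite card_ord.
pose g := add_color f [set ord_max] c.
apply: (min_weight_eq (f := g)) => [| | h]; last exact: out_star_TkRDF_weight_ge.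
  apply/andP; split; first exact: is_kRDF_mono (add_color_sub f _ _) f_kRDF.
  apply/forallP => v; apply/implyP => _; apply/existsP.
  have g_ne v' : c \in g v' -> g v' != set0 by move=> cg; apply/set0Pn; exists c.
  case: (eqVneq v ord0) => [-> | v_ne0].
    exists ord_max; rewrite g_ne ?mem_add_color ?set11 //= /uadj /out_star eqxx /=.
    by rewrite -(inj_eq val_inj) /= -lt0n k_gt0 orbT.
  exists ord0; rewrite g_ne /uadj /out_star ?eqxx ?v_ne0 //.
  by apply: (subsetP (add_color_sub f _ _ _)); rewrite f0 inE.
by have := weight_add_color f [set ord_max] c; rewrite wf cards1 addn1.
Qed.

Theorem theorem2p3 :
  (forall (k : nat) (V : finType) (arc : rel V),
     0 < k -> loopless arc -> dconnected arc -> maxn k 2 <= #|V| ->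
     gamma_rk arc k <= gamma_trk arc k /\
     gamma_trk arc k <= 2 * gamma_rk arc k - k + 1)
  /\
  (forall k : nat, 0 < k ->
     (exists (V : finType) (arc : rel V),
        [/\ loopless arc, dconnected arc, maxn k 2 <= #|V| &
            gamma_trk arc k = gamma_rk arc k])
     /\
     (exists (V : finType) (arc : rel V),
        [/\ loopless arc, dconnected arc, maxn k 2 <= #|V| &
            gamma_trk arc k = 2 * gamma_rk arc k - k + 1])).
Proof.
split.
  move=> k V arc k_gt0 _ conn; rewrite geq_max => /andP[kV nV]; split.
    exact: min_weight_sub (@TkRDF_kRDF _ arc k).
  have [f f_kRDF ->] := gamma_rk_attained arc k_gt0.
  have [g g_T wg] := TkRDF_of_kRDF k_gt0 conn nV kV f_kRDF.
  have : gamma_trk arc k <= weight g := min_weight_le g_T.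
  lia.
move=> k k_gt0; split; last first.
  have [rk trk] := gamma_out_star k_gt0.
  exists 'I_k.+1, (out_star k); split; rewrite ?card_ord ?rk ?trk; try lia.
  - exact: out_star_loopless.
  - exact: out_star_connected.
have [k_gt1 | k_le1] := ltnP 1 k.
  have [rk trk] := gamma_complete_digraph k_gt1.
  exists 'I_k, (complete_digraph k); split; rewrite ?card_ord ?rk ?trk; try lia.
  - exact: complete_digraph_loopless.
  - exact: complete_digraph_connected.
have -> : k = 1 by lia.
have [rk trk] := gamma_path3.
exists 'I_3, path3; split; rewrite ?card_ord ?rk ?trk //.
- exact: path3_loopless.
- exact: path3_connected.
Qed.
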